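(* Assume the Setup (for a single $n$) and the Spectral notation, and let $\epsilon,\delta>0$ be arbitrary. Then \[|U_{\epsilon,\delta}|\le \frac{m\,k(k+1)}{d^2\epsilon\delta}.\]
   Context: Setup. $k\ge 1$ is an integer and $d$ a positive integer. $G=(V,U,E)$ is a finite simple bipartite graph with parts $V$, $|V|=n$, and $U$, $|U|=m$, which is $C_4$-free (any two distinct vertices have at most one common neighbour) and $(d,k+1)$-bi-regular (every $v\in V$ has degree $d$ and every $u\in U$ has degree $k+1$). $B$ is a signed adjacency matrix of $G$: the real $V\times U$ matrix with $B_{v,u}\in\{1,-1\}$ if $vu\in E$ and $B_{v,u}=0$ otherwise. Spectral notation. $L^-=\frac1d B^TB$ (a $U\times U$ positive semidefinite matrix); $\lambda_1,\dots,\lambda_{\operatorname{rank}B}$ are its positive eigenvalues (with multiplicity) and $\psi_1,\dots,\psi_{\operatorname{rank}B}\in\mathbb R^U$ a corresponding orthonormal family of eigenvectors. A vertex $u\in U$ is $(\epsilon,\delta)$-structured if $\sum_{i:(\lambda_i-1)^2>\epsilon}\psi_i(u)^2>\delta$, and $U_{\epsilon,\delta}$ is the set of such vertices. *)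

From HB Require Import structures.
From mathcomp Require Import all_boot all_order all_algebra.
From mathcomp Require Import reals.
Set Implicit Arguments. Unset Strict Implicit. Unset Printing Implicit Defensive.
Import Order.TTheory GRing.Theory Num.Theory.
Local Open Scope ring_scope.

(* A bipartite graph G = (V, U, E) with V = 'I_n, U = 'I_m, given by its
   edge relation E v u ("vu is an edge").  Bipartite graphs given this way
   are automatically simple (no loops, no multi-edges). *)

Definition C4_free (n m : nat) (E : 'I_n -> 'I_m -> bool) : Prop :=
  (forall v v' : 'I_n, v != v' -> (#|[set u | E v u && E v' u]| <= 1)%N) /\
  (forall u u' : 'I_m, u != u' -> (#|[set v | E v u && E v u']| <= 1)%N).

Definition biregular (n m : nat) (E : 'I_n -> 'I_m -> bool) (d k : nat) : Prop :=
  (forall v : 'I_n, #|[set u | E v u]| = d) /\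
  (forall u : 'I_m, #|[set v | E v u]| = k.+1).

Definition signed_adj (R : numDomainType) (n m : nat)
  (E : 'I_n -> 'I_m -> bool) (B : 'M[R]_(n, m)) : Prop :=
  forall v u, if E v u then (B v u = 1 \/ B v u = -1) else B v u = 0.

Definition Lminus (R : fieldType) (n m d : nat) (B : 'M[R]_(n, m)) : 'M[R]_m :=
  (d%:R)^-1 *: (B^T *m B).

Definition spectral_data (R : realFieldType) (n m d : nat) (B : 'M[R]_(n, m))
  (lam : 'I_(\rank B) -> R) (psi : 'I_(\rank B) -> 'cV[R]_m) : Prop :=
  (forall i, 0 < lam i) /\
  (forall i, Lminus d B *m psi i = lam i *: psi i) /\
  (forall i j, (psi i)^T *m psi j = ((i == j)%:R)%:M).

Definition structured_set (R : realFieldType) (m r : nat)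
  (lam : 'I_r -> R) (psi : 'I_r -> 'cV[R]_m) (eps delta : R) : {set 'I_m} :=
  [set u | delta < \sum_(i < r | eps < (lam i - 1) ^+ 2) (psi i u ord0) ^+ 2].

From HB Require Import structures.
From mathcomp Require Import all_boot all_order all_algebra.
From mathcomp Require Import reals lra.
Set Implicit Arguments. Unset Strict Implicit. Unset Printing Implicit Defensive.
Import Order.TTheory GRing.Theory Num.Theory.
Local Open Scope ring_scope.

(* The vectors w_i = B psi_i are pairwise orthogonal eigenvectors of
   A = B B^T - d I, with eigenvalues d (lam_i - 1) and squared norms d lam_i.
   Applying Bessel's inequality to each row of A gives
   d^2 sum_i (lam_i - 1)^2 <= ||A||_F^2, and C4-freeness makes every
   off-diagonal entry of B B^T at most 1 in absolute value while the diagonal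
   of A vanishes, so counting paths of length 2 gives ||A||_F^2 <= m k (k+1).
   Finally each structured vertex carries mass > delta of the at most
   sum_i (lam_i - 1)^2 / eps eigenvectors with (lam_i - 1)^2 > eps, each of
   unit norm. *)

Lemma sum_nat_indicator (R : numDomainType) (T : finType) (P : pred T) :
  \sum_(x : T) ((P x)%:R : R) = #|[set x | P x]|%:R.
Proof.
rewrite -sum1_card natr_sum [RHS]big_mkcond /=; apply: eq_bigr => x _.
by rewrite inE; case: (P x).
Qed.

Lemma ler_sum_cond (R : numDomainType) (T : finType) (P : pred T) (f : T -> R) :
  (forall x, 0 <= f x) -> \sum_(x | P x) f x <= \sum_x f x.
Proof.
by move=> f_ge0; rewrite [X in X <= _]big_mkcond ler_sum // => x _; case: (P x).
Qed.

Lemma trmx_mul_cV_entry (R : pzSemiRingType) p (x y : 'cV[R]_p) :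
  (x^T *m y) ord0 ord0 = \sum_v x v ord0 * y v ord0.
Proof. by rewrite !mxE; apply: eq_bigr => v _; rewrite mxE. Qed.

Lemma bessel_ineq (R : realFieldType) (n r : nat) (a : 'I_n -> R)
    (w : 'I_r -> 'I_n -> R) :
  (forall i j, i != j -> \sum_v w i v * w j v = 0) ->
  (forall i, 0 < \sum_v w i v ^+ 2) ->
  \sum_i (\sum_v a v * w i v) ^+ 2 / \sum_v w i v ^+ 2 <= \sum_v a v ^+ 2.
Proof.
move=> w_orth w_pos.
pose t i := (\sum_v a v * w i v) / \sum_v w i v ^+ 2.
pose b v := a v - \sum_j t j * w j v.
have sum_proj f : \sum_v (\sum_j t j * w j v) * f v
                  = \sum_j t j * \sum_v w j v * f v.
  under eq_bigr do rewrite mulr_suml.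
  rewrite exchange_big /=; apply: eq_bigr => j _.
  by rewrite mulr_sumr; apply: eq_bigr => v _; rewrite mulrA.
have b_orth i : \sum_v w i v * b v = 0.
  under eq_bigr do rewrite mulrC mulrBl.
  rewrite sumrB sum_proj (bigD1 i) //= [X in t i * _ + X]big1 => [|j ji];
    last by rewrite w_orth ?mulr0.
  rewrite addr0 /t -[\sum_v w i v * w i v]/(\sum_v w i v ^+ 2) divfK ?subrr //.
  exact: lt0r_neq0.
have b_sqr : \sum_v b v ^+ 2 = \sum_v a v ^+ 2 - \sum_i t i * \sum_v a v * w i v.
  transitivity (\sum_v b v * a v - \sum_v (\sum_j t j * w j v) * b v).
    rewrite -sumrB; apply: eq_bigr => v _.
    by rewrite expr2 {2}/b mulrBr [_ * b v]mulrC.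
  rewrite sum_proj [X in _ - X]big1 ?subr0 => [|j _]; last first.
    by rewrite b_orth mulr0.
  under eq_bigr do rewrite mulrBl.
  rewrite sumrB sum_proj; congr (_ - _); apply: eq_bigr => j _.
  by congr (_ * _); apply: eq_bigr => v _; rewrite mulrC.
have : 0 <= \sum_v b v ^+ 2 by apply: sumr_ge0 => v _; exact: sqr_ge0.
rewrite b_sqr subr_ge0; apply: le_trans; rewrite le_eqVlt; apply/orP; left.
by apply/eqP/eq_bigr => i _; rewrite /t expr2 mulrAC.
Qed.

Lemma orthogonal_image_le_frobenius (R : realFieldType) (n r : nat)
    (A : 'M[R]_n) (w : 'I_r -> 'I_n -> R) :
  (forall i j, i != j -> \sum_v w i v * w j v = 0) ->
  (forall i, 0 < \sum_v w i v ^+ 2) ->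
  \sum_i (\sum_v (\sum_v' A v v' * w i v') ^+ 2) / \sum_v w i v ^+ 2
    <= \sum_v \sum_v' A v v' ^+ 2.
Proof.
move=> w_orth w_pos; under eq_bigr do rewrite mulr_suml.
by rewrite exchange_big ler_sum // => v _; apply: bessel_ineq.
Qed.

Section SignedAdjacency.

Variables (R : realFieldType) (n m d k : nat) (E : 'I_n -> 'I_m -> bool).
Variable B : 'M[R]_(n, m).
Hypothesis C4_V : forall v v' : 'I_n, v != v' ->
  (#|[set u | E v u && E v' u]| <= 1)%N.
Hypothesis E_biregular : biregular E d k.
Hypothesis B_signed : signed_adj E B.

Let e v u : R := (E v u)%:R.

Lemma signed_adj_sqr v u : B v u ^+ 2 = e v u.
Proof.
by move: (B_signed v u); rewrite /e; case: (E v u) => [[]->|->];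
  rewrite ?sqrrN ?expr1n ?expr0n.
Qed.

Lemma signed_adj_norm v u : `|B v u| = e v u.
Proof.
by move: (B_signed v u); rewrite /e; case: (E v u) => [[]->|->];
  rewrite ?normrN ?normr1 ?normr0.
Qed.

Lemma gram_entry v v' : (B *m B^T) v v' = \sum_u B v u * B v' u.
Proof. by rewrite mxE; apply: eq_bigr => u _; rewrite mxE. Qed.

Lemma gram_diag v : (B *m B^T) v v = d%:R.
Proof.
rewrite gram_entry -(E_biregular.1 v) -sum_nat_indicator.
by apply: eq_bigr => u _; rewrite -expr2 signed_adj_sqr.
Qed.

Lemma gram_offdiag_sqr_le v v' : v != v' ->
  (B *m B^T) v v' ^+ 2 <= \sum_u e v u * e v' u.
Proof.
move=> vv'; rewrite gram_entry; set x := \sum_u _; set c := \sum_u _.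
have x_le_c : `|x| <= c.
  apply: le_trans (ler_norm_sum _ _ _) _; apply: ler_sum => u _.
  by rewrite normrM !signed_adj_norm.
have c_le1 : c <= 1.
  have -> : c = #|[set u | E v u && E v' u]|%:R.
    rewrite -sum_nat_indicator; apply: eq_bigr => u _; rewrite /e.
    by case: (E v u); case: (E v' u); rewrite ?mulr0 ?mulr1.
  by rewrite -[1]/(1%:R) ler_nat C4_V.
rewrite -real_normK ?num_real //.
have := normr_ge0 x; nra.
Qed.

(* Double counting of paths v - u - v' with v != v'. *)
Lemma frobenius_gram_sub_le :
  \sum_v \sum_v' (B *m B^T - d%:R%:M) v v' ^+ 2 <= (m * k * k.+1)%:R.
Proof.
have entry_le v v' : (B *m B^T - d%:R%:M) v v' ^+ 2
                     <= (v' != v)%:R * \sum_u e v u * e v' u.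
  rewrite [X in X ^+ 2]mxE [X in _ + X]mxE [X in - X]mxE.
  have [<-|v'v] := eqVneq v' v.
    by rewrite mulr1n gram_diag subrr expr0n mul0r.
  by rewrite mulr0n subr0 mul1r gram_offdiag_sqr_le // eq_sym.
apply: le_trans (ler_sum _ (fun v _ => ler_sum _ (fun v' _ => entry_le v v'))) _.
have others u v : \sum_v' (v' != v)%:R * e v' u = k.+1%:R - e v u.
  rewrite -(E_biregular.2 u) -(sum_nat_indicator _ (E ^~ u)) (bigD1 v) //=.
  rewrite [in RHS](bigD1 v) //= eqxx mul0r add0r addrC addrK.
  by apply: eq_bigr => v' ->; rewrite mul1r.
have -> : \sum_v \sum_v' (v' != v)%:R * \sum_u e v u * e v' u
          = \sum_u \sum_v e v u * \sum_v' (v' != v)%:R * e v' u.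
  rewrite [RHS]exchange_big /=; apply: eq_bigr => v _.
  under eq_bigr do rewrite mulr_sumr.
  rewrite exchange_big /=; apply: eq_bigr => u _.
  by rewrite mulr_sumr; apply: eq_bigr => v' _; rewrite mulrCA.
have e_idem v u : e v u * e v u = e v u.
  by rewrite /e; case: (E v u); rewrite ?mulr0 ?mulr1.
have column u : \sum_v e v u * (k.+1%:R - e v u) = (k * k.+1)%:R.
  under eq_bigr => v _ do
    rewrite mulrBr e_idem -[X in _ - X]mulr1 -mulrBr -natr1 addrK.
  rewrite -mulr_suml (sum_nat_indicator _ (E ^~ u)) (E_biregular.2 u).
  by rewrite -natrM mulnC.
under eq_bigr do under eq_bigr do rewrite others.
under eq_bigr do rewrite column.
by rewrite sumr_const card_ord -mulrnA ler_nat mulnC mulnA.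
Qed.

End SignedAdjacency.

Section SpectralData.

Variables (R : realFieldType) (n m d : nat) (B : 'M[R]_(n, m)).
Variables (lam : 'I_(\rank B) -> R) (psi : 'I_(\rank B) -> 'cV[R]_m).
Hypothesis d_gt0 : (0 < d)%N.
Hypothesis B_spectral : spectral_data d lam psi.

Let BtB_Lminus : B^T *m B = d%:R *: Lminus d B.
Proof. by rewrite /Lminus scalerA mulfV ?scale1r // pnatr_eq0 -lt0n. Qed.

Lemma gram_sub_eigen i :
  (B *m B^T - d%:R%:M) *m (B *m psi i) = (d%:R * (lam i - 1)) *: (B *m psi i).
Proof.
rewrite mulmxBl mul_scalar_mx -!mulmxA [B^T *m _]mulmxA BtB_Lminus -scalemxAl.
rewrite B_spectral.2.1 -!scalemxAr scalerA -scalerBl.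
by rewrite mulrBr mulr1.
Qed.

Lemma image_dot i j :
  (B *m psi i)^T *m (B *m psi j) = (d%:R * lam j * (i == j)%:R)%:M.
Proof.
rewrite trmx_mul -!mulmxA [B^T *m (B *m _)]mulmxA BtB_Lminus -scalemxAl.
rewrite B_spectral.2.1 -!scalemxAr B_spectral.2.2 scalerA.
by rewrite scale_scalar_mx.
Qed.

Lemma image_dot_entry i j :
  \sum_v (B *m psi i) v ord0 * (B *m psi j) v ord0
    = d%:R * lam j * (i == j)%:R.
Proof. by rewrite -trmx_mul_cV_entry image_dot mxE eqxx mulr1n. Qed.

Lemma image_norm_gt0 i : 0 < \sum_v (B *m psi i) v ord0 ^+ 2.
Proof.
under eq_bigr do rewrite expr2.
by rewrite image_dot_entry eqxx mulr1 mulr_gt0 ?ltr0n // B_spectral.1.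
Qed.

Lemma deviation_sum_le_frobenius :
  d%:R ^+ 2 * \sum_i (lam i - 1) ^+ 2
    <= \sum_v \sum_v' (B *m B^T - d%:R%:M) v v' ^+ 2.
Proof.
pose A := B *m B^T - d%:R%:M; pose w i v := (B *m psi i) v ord0.
have w_orth i j : i != j -> \sum_v w i v * w j v = 0.
  by move=> ij; rewrite image_dot_entry (negbTE ij) mulr0.
have w_norm i : \sum_v w i v ^+ 2 = d%:R * lam i.
  by under eq_bigr do rewrite expr2; rewrite image_dot_entry eqxx mulr1.
have A_w i v : \sum_v' A v v' * w i v' = d%:R * (lam i - 1) * w i v.
  have := congr1 (fun M : 'cV[R]_n => M v ord0) (gram_sub_eigen i).
  by rewrite /= [X in X = _]mxE [X in _ = X]mxE => <-.
apply: le_trans (orthogonal_image_le_frobenius A w_orth image_norm_gt0).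
rewrite mulr_sumr le_eqVlt; apply/orP; left; apply/eqP/eq_bigr => i _.
under eq_bigr => v _ do rewrite A_w exprMn.
rewrite -mulr_sumr mulfK ?exprMn //.
by apply: lt0r_neq0; apply: image_norm_gt0.
Qed.

End SpectralData.

Lemma card_structured_mul_le (R : realFieldType) (m r : nat) (lam : 'I_r -> R)
    (psi : 'I_r -> 'cV[R]_m) (eps delta : R) :
  (forall i, \sum_u psi i u ord0 ^+ 2 = 1) ->
  #|structured_set lam psi eps delta|%:R * delta
    <= #|[set i | eps < (lam i - 1) ^+ 2]|%:R.
Proof.
move=> psi_unit; set S := structured_set _ _ _ _.
rewrite mulr_natl -sumr_const.
apply: le_trans (_ : \sum_(u in S) \sum_(i | eps < (lam i - 1) ^+ 2)
                       psi i u ord0 ^+ 2 <= _).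
  by apply: ler_sum => u; rewrite inE => /ltW.
apply: le_trans (ler_sum_cond _ _) _ => [u|].
  by apply: sumr_ge0 => i _; exact: sqr_ge0.
rewrite exchange_big /= -sum_nat_indicator big_mkcond /=.
by apply: ler_sum => i _; case: ifP; rewrite ?psi_unit.
Qed.

Lemma card_gt_mul_le_sum (R : realFieldType) (T : finType) (f : T -> R) (eps : R) :
  (forall x, 0 <= f x) -> #|[set x | eps < f x]|%:R * eps <= \sum_x f x.
Proof.
move=> f_ge0; rewrite -sum_nat_indicator mulr_suml.
apply: le_trans (ler_sum_cond (fun x => eps < f x) f_ge0).
rewrite [X in _ <= X]big_mkcond /=; apply: ler_sum => x _.
by case: ifP => [/ltW|]; rewrite ?mul1r ?mul0r.
Qed.

Theorem claim2p4 (R : realType) (k d n m : nat) (E : 'I_n -> 'I_m -> bool)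
  (B : 'M[R]_(n, m)) (lam : 'I_(\rank B) -> R) (psi : 'I_(\rank B) -> 'cV[R]_m)
  (eps delta : R) :
  (1 <= k)%N -> (0 < d)%N ->
  C4_free E -> biregular E d k -> signed_adj E B ->
  @spectral_data R n m d B lam psi ->
  0 < eps -> 0 < delta ->
  (#|structured_set lam psi eps delta|)%:R
    <= (m * k * k.+1)%:R / ((d ^ 2)%:R * eps * delta).
Proof.
move=> _ d_gt0 [C4_V _] E_bireg B_signed B_spectral eps_gt0 delta_gt0.
have psi_unit i : \sum_u psi i u ord0 ^+ 2 = 1.
  under eq_bigr do rewrite expr2.
  by rewrite -trmx_mul_cV_entry B_spectral.2.2 mxE !eqxx.
have d2_gt0 : (0 : R) < (d ^ 2)%:R by rewrite ltr0n expn_gt0 d_gt0.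
rewrite ler_pdivlMr ?mulr_gt0 // natrX.
apply: le_trans (frobenius_gram_sub_le C4_V E_bireg B_signed).
apply: le_trans (deviation_sum_le_frobenius d_gt0 B_spectral).
rewrite mulrCA -mulrA ler_wpM2l ?exprn_ge0 ?ler0n // mulrC.
apply: le_trans (card_gt_mul_le_sum eps (fun i => sqr_ge0 (lam i - 1))).
by rewrite ler_wpM2r ?(ltW eps_gt0) //; apply: card_structured_mul_le.
Qed.
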